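(* Let $q$ be a prime power and let $n,k$ be integers with $5\le k\le \frac{n-2}{2}$ and $n\le q$. Let $\alpha_1,\dots,\alpha_n\in\mathbb{F}_q$ be pairwise distinct, and let $C_{k-1,k-2}$ be the linear code generated by the $k\times n$ matrix whose rows are $(\alpha_1^{e},\dots,\alpha_n^{e})$ for $e=0,1,\dots,k-3,k,k+1$. If $C_{k-1,k-2}$ is MDS, then $C_{k-1,k-2}$ is a non-GRS MDS code.
   Context: Convention: $0^0=1$. A linear code is MDS if its parameters $[n,k,d]$ satisfy $d=n-k+1$. For pairwise distinct $a_1,\dots,a_n\in\mathbb{F}_q$ and $w\in(\mathbb{F}_q^* )^n$, the generalized Reed–Solomon code is $GRS(n,k,\{a_i\},w)=\{(w_1f(a_1),\dots,w_nf(a_n)) : f\in\mathbb{F}_q[x],\ \deg f\le k-1\}$. Two codes are (monomially) equivalent if one is obtained from the other by a permutation of coordinates and multiplication of coordinates by nonzero scalars. A non-GRS MDS code is an MDS code not equivalent to any GRS code. *)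

From HB Require Import structures.
From mathcomp Require Import all_boot all_order all_algebra all_fingroup all_field.
Set Implicit Arguments. Unset Strict Implicit. Unset Printing Implicit Defensive.
Import GRing.Theory.
Local Open Scope ring_scope.

Section Codes.
Variable F : fieldType.

Definition wt n (x : 'rV[F]_n) : nat := #|[set i | x 0 i != 0]|.

Definition code_of_mx k n (G : 'M[F]_(k, n)) : 'rV[F]_n -> Prop :=
  fun x => (x <= G)%MS.

Definition has_min_dist n (C : 'rV[F]_n -> Prop) (d : nat) : Prop :=
  (exists c, [/\ C c, c != 0 & wt c = d]) /\
  (forall c, C c -> c != 0 -> (d <= wt c)%N).

Definition MDS_mx k n (G : 'M[F]_(k, n)) : Prop :=
  has_min_dist (code_of_mx G) (n - \rank G + 1)%N.

Definition GRS n (k : nat) (a : 'I_n -> F) (w : 'I_n -> F) : 'rV[F]_n -> Prop :=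
  fun x => exists p : {poly F}, (size p <= k)%N /\ x = \row_i (w i * p.[a i]).

Definition monomial_map n (s : 'S_n) (v : 'I_n -> F) (x : 'rV[F]_n) : 'rV[F]_n :=
  \row_i (v i * x 0 (s i)).

Definition code_equiv n (C1 C2 : 'rV[F]_n -> Prop) : Prop :=
  exists (s : 'S_n) (v : 'I_n -> F), (forall i, v i != 0) /\
    (forall y, C2 y <-> exists x, C1 x /\ y = monomial_map s v x).

Definition is_GRS_equiv n (C : 'rV[F]_n -> Prop) : Prop :=
  exists (k : nat) (a w : 'I_n -> F),
    injective a /\ (forall i, w i != 0) /\ code_equiv (GRS k a w) C.

(* exponents 0,1,...,k-3,k,k+1 : row r has exponent r if r < k-2, else r+2 *)
Definition expo (k r : nat) : nat := if (r < k - 2)%N then r else (r + 2)%N.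

Definition gen_mx_C k n (alpha : 'I_n -> F) : 'M[F]_(k, n) :=
  \matrix_(r < k, i < n) alpha i ^+ expo k r.

End Codes.

(* If C were equivalent to a GRS code with evaluation points b and column multipliers u,
   then its Schur square, spanned by the products of pairs of codewords, would lie in
   the GRS code of dimension 2 dim(C) - 1 with multipliers u^2.  But the exponents
   0..k-3, k, k+1 of C add up to every e <= 2k-2 and to e = 2k, so the Schur square
   of C contains the 2k independent vectors (alpha_i^e)_i: too many. *)
From HB Require Import structures.
From mathcomp Require Import all_boot all_order all_algebra all_fingroup all_field.
From mathcomp Require Import zify.
Set Implicit Arguments. Unset Strict Implicit.
Import GRing.Theory.
Local Open Scope ring_scope.

Section ScaledEvaluation.
Variables (F : fieldType) (n : nat).
Implicit Types (u v b : 'I_n -> F) (p q : {poly F}).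

Definition scaled_eval u b p : 'rV[F]_n := \row_i (u i * p.[b i]).

Definition pow_mx m u b (f : 'I_m -> nat) : 'M[F]_(m, n) :=
  \matrix_(j < m, i < n) (u i * b i ^+ f j).

Definition scaled_vdm m u b : 'M[F]_(m, n) := pow_mx u b (@nat_of_ord m).

Lemma pow_mx_row_free m u b (f : 'I_m -> nat) :
  injective b -> injective f -> (forall j, f j < n)%N -> (forall i, u i != 0) ->
  row_free (pow_mx u b f).
Proof.
move=> b_inj f_inj f_lt u_nz; apply/inj_row_free => x xM0.
pose q : {poly F} := \sum_(j < m) x 0 j *: 'X^(f j).
have coef_q e : q`_e = \sum_(j < m) x 0 j * (e == f j)%:R.
  by rewrite coef_sum; apply: eq_bigr => j _; rewrite coefZ coefXn.
have q_size : (size q <= n)%N.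
  apply/leq_sizeP => e le_ne; rewrite coef_q big1 // => j _.
  by rewrite gtn_eqF ?mulr0 //; apply: leq_trans (f_lt j) le_ne.
have q_root i : root q (b i).
  have : u i * q.[b i] = (x *m pow_mx u b f) 0 i.
    rewrite horner_sum mulr_sumr !mxE; apply: eq_bigr => j _.
    by rewrite !mxE hornerZ hornerXn mulrCA.
  by rewrite xM0 mxE => /eqP; rewrite mulf_eq0 (negbTE (u_nz i)).
have q0 : q = 0.
  apply: (roots_geq_poly_eq0 (rs := map b (enum 'I_n))).
  - by apply/allP => _ /mapP [i _ ->].
  - by rewrite map_inj_uniq ?enum_uniq.
  - by rewrite size_map size_enum_ord.
apply/rowP => j; have := coef_q (f j); rewrite q0 coef0 (bigD1 j) //= eqxx mulr1.
rewrite big1 ?addr0 ?mxE // => j' /negbTE nj'j.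
by rewrite (inj_eq f_inj) eq_sym nj'j mulr0.
Qed.

Lemma scaled_eval_sub_vdm m u b p :
  (size p <= m)%N -> (scaled_eval u b p <= scaled_vdm m u b)%MS.
Proof.
move=> p_size; apply/submxP; exists (poly_rV p); apply/rowP => i.
rewrite !mxE (horner_coef_wide _ p_size) mulr_sumr.
by apply: eq_bigr => j _; rewrite !mxE mulrCA.
Qed.

Lemma schur_scaled_eval u v b p q :
  map2_mx *%R (scaled_eval u b p) (scaled_eval v b q)
  = scaled_eval (fun i => u i * v i) b (p * q).
Proof. by apply/rowP => i; rewrite !mxE hornerM mulrACA. Qed.


Lemma row_scaled_vdm m u b (j : 'I_m) : row j (scaled_vdm m u b) = scaled_eval u b 'X^j.
Proof. by apply/rowP => i; rewrite !mxE hornerXn. Qed.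

Lemma rank_scaled_vdm m u b :
  injective b -> (m <= n)%N -> (forall i, u i != 0) -> \rank (scaled_vdm m u b) = m.
Proof.
move=> b_inj le_mn u_nz; apply/eqP/pow_mx_row_free => //; first exact: val_inj.
by move=> j; apply: leq_trans (ltn_ord j) le_mn.
Qed.

End ScaledEvaluation.

Definition scaled_GRS (F : fieldType) n d (u b : 'I_n -> F) : 'rV[F]_n -> Prop :=
  fun y => exists2 p : {poly F}, (size p <= d)%N & y = scaled_eval u b p.

Lemma is_GRS_equiv_scaled (F : fieldType) n (C : 'rV[F]_n -> Prop) :
  is_GRS_equiv C -> exists d (u b : 'I_n -> F),
    [/\ injective b, forall i, u i != 0 & forall y, C y <-> scaled_GRS d u b y].
Proof.
case=> d [a [w [a_inj [w_nz [s [v [v_nz C_eq]]]]]]].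
exists d, (fun i => v i * w (s i)), (fun i => a (s i)); split.
- by move=> i j /a_inj /perm_inj.
- by move=> i; rewrite mulf_neq0.
move=> y; rewrite C_eq; split.
- case=> _ [[p [p_size ->]] ->]; exists p => //.
  by apply/rowP => i; rewrite !mxE mulrA.
case=> p p_size ->; exists (\row_i (w i * p.[a i])); split; first by exists p.
by apply/rowP => i; rewrite !mxE mulrA.
Qed.

Section ScaledGRSCode.
Variables (F : fieldType) (m n d : nat) (u b : 'I_n -> F) (G : 'M[F]_(m, n)).
Hypothesis G_eq : forall y, code_of_mx G y <-> scaled_GRS d u b y.

Lemma scaled_GRS_rank :
  injective b -> (forall i, u i != 0) -> (minn d n <= \rank G)%N.
Proof.
move=> b_inj u_nz; rewrite -[leqLHS](@rank_scaled_vdm _ _ _ u b) ?geq_minr //.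
apply/mxrankS/row_subP => j; rewrite row_scaled_vdm; apply/G_eq; exists 'X^j => //.
by rewrite size_polyXn; apply: leq_trans (ltn_ord j) (geq_minl _ _).
Qed.

Lemma scaled_GRS_schur x y : code_of_mx G x -> code_of_mx G y ->
  (map2_mx *%R x y <= scaled_vdm (d + d).-1 (fun i => u i * u i)%R b)%MS.
Proof.
move=> /G_eq [p p_size ->] /G_eq [q q_size ->]; rewrite schur_scaled_eval.
apply/scaled_eval_sub_vdm/(leq_trans (size_polyMleq p q)).
by rewrite -!subn1 leq_sub2r // leq_add.
Qed.

End ScaledGRSCode.

Definition C_expo k e := [|| (e <= k - 3)%N, e == k | e == k.+1].

Lemma row_pow_sub_gen_mx_C (F : fieldType) k n (alpha : 'I_n -> F) e :
  (3 <= k)%N -> C_expo k e -> (\row_i alpha i ^+ e <= gen_mx_C k alpha)%MS.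
Proof.
rewrite /C_expo => k3 e_expo.
have r_lt : ((if (e <= k - 3)%N then e else e - 2) < k)%N by case: ifP; lia.
suff -> : \row_i alpha i ^+ e = row (Ordinal r_lt) (gen_mx_C k alpha) by apply: row_sub.
by apply/rowP => i; rewrite !mxE /expo /=; congr (_ ^+ _); case: ifP; case: ifP; lia.
Qed.

Lemma C_expo_add k e : (5 <= k)%N -> (e <= 2 * k - 2)%N || (e == 2 * k) ->
  exists e1 e2, [/\ C_expo k e1, C_expo k e2 & e1 + e2 = e]%N.
Proof.
move=> k5 e_le; rewrite /C_expo.
case: (leqP e (2 * k - 6)) => e_small.
  by exists (minn e (k - 3)), (e - minn e (k - 3))%N; split; lia.
case: (leqP e (2 * k - 3)) => e_mid.
  by exists k, (e - k)%N; split; lia.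
case: (e =P (2 * k - 2)%N) => e_eq.
  by exists k.+1, (k - 3)%N; split; lia.
by exists k, k; split; lia.
Qed.

Definition schur_expo k (j : 'I_(2 * k)) : nat := if (2 * k - 1 <= j)%N then j.+1 else j.

Lemma schur_expo_inj k : injective (@schur_expo k).
Proof.
move=> i j; rewrite /schur_expo => eq_ij; apply/val_inj => /=.
by move: eq_ij (ltn_ord i) (ltn_ord j); case: ifP; case: ifP; lia.
Qed.

Lemma schur_expo_range k (j : 'I_(2 * k)) :
  (schur_expo j <= 2 * k - 2)%N || (schur_expo j == 2 * k).
Proof. by move: (ltn_ord j); rewrite /schur_expo; case: ifP; lia. Qed.

Lemma pow_mx_schur_expo_sub (F : fieldType) k n (alpha : 'I_n -> F) m (M : 'M[F]_(m, n)) :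
  (5 <= k)%N ->
  (forall x y, code_of_mx (gen_mx_C k alpha) x -> code_of_mx (gen_mx_C k alpha) y ->
     (map2_mx *%R x y <= M)%MS) ->
  (pow_mx (fun=> 1) alpha (@schur_expo k) <= M)%MS.
Proof.
move=> k5 schur_sub; apply/row_subP => j.
have [e1 [e2 [e1_expo e2_expo e12]]] := C_expo_add k5 (schur_expo_range j).
suff -> : row j (pow_mx (fun=> 1) alpha (@schur_expo k))
          = map2_mx *%R (\row_i alpha i ^+ e1) (\row_i alpha i ^+ e2).
  by apply: schur_sub; apply: row_pow_sub_gen_mx_C => //; lia.
by apply/rowP => i; rewrite !mxE mul1r -e12 exprD.
Qed.

Theorem theorem3p7 (F : finFieldType) (n k : nat) (alpha : 'I_n -> F) :
  (5 <= k)%N -> (2 * k + 2 <= n)%N -> (n <= #|F|)%N ->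
  injective alpha ->
  MDS_mx (gen_mx_C k alpha) ->
  MDS_mx (gen_mx_C k alpha) /\ ~ is_GRS_equiv (code_of_mx (gen_mx_C k alpha)).
Proof.
move=> k5 n_ge _ alpha_inj C_MDS; split=> //.
case/is_GRS_equiv_scaled => d [u [b [b_inj u_nz C_eq]]].
have d_le_k : (d <= k)%N.
  have := scaled_GRS_rank C_eq b_inj u_nz; have := rank_leq_row (gen_mx_C k alpha).
  lia.
have rank_schur_square : \rank (pow_mx (fun=> 1) alpha (@schur_expo k)) = (2 * k)%N.
  apply/eqP/pow_mx_row_free => //; first exact: schur_expo_inj.
  - by move=> j; have := schur_expo_range j; lia.
  - by move=> _; apply: oner_neq0.
have := mxrankS (pow_mx_schur_expo_sub k5 (scaled_GRS_schur C_eq)).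
rewrite rank_schur_square; have := rank_leq_row (scaled_vdm (d + d).-1 (fun i => u i * u i) b).
lia.
Qed.
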